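(* Let $(B_a)_{a\in A}$ be a polynomial and let $S:=\sum_{a\in A}\mathcal P(B_a)$. Suppose $(X,t)$ is an algebra for $(B_a)_{a\in A}$ satisfying all image preserving equations with variable set $S$, i.e. for all $a,c\in A$, all $l:B_a\to S$, $r:B_c\to S$ with equal images, and all $k:S\to X$, one has $t(a,k\circ l)=t(c,k\circ r)$. Then there is a unique homomorphism (class function) $h:H((B_a)_{a\in A})\to X$, i.e. a unique class function with $h(\{f(b)\mid b\in B_a\})=t(a,h\circ f)$ for all $a\in A$ and $f:B_a\to H((B_a)_{a\in A})$.
   Context: Work in $\mathbf{ZF}$. A polynomial is a set $A$ with a family of sets $(B_a)_{a\in A}$. An algebra for it is a set $X$ with a function $t:\sum_{a\in A}X^{B_a}\to X$; a homomorphism $(X,s)\to(Y,t)$ is a (class) function $h$ with $h(s(a,f))=t(a,h\circ f)$ for all $a\in A$, $f:B_a\to X$; the same definitions apply to classes with class functions. A set $X$ is small relative to $(B_a)_{a\in A}$ if there are $a\in A$ and a surjection $B_a\to X$; it is hereditarily small if it is small and all its elements are hereditarily small. $H((B_a)_{a\in A})$ is the class of hereditarily small sets, with algebra structure $s(a,f):=\{f(b)\mid b\in B_a\}$. *)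

(* A model of ZF set theory given as a structure on a Rocq type:
   the class of all sets is the type [V]; classes are Rocq predicates on [V];
   class functions are Rocq functions [V -> V] (considered on their domain class).
   Separation, replacement and foundation (as epsilon-induction) are stated for
   arbitrary Rocq predicates/functions, so every class we use is available. *)

Record ZF := {
  V :> Type;
  mem : V -> V -> Prop;
  emp : V;
  upair : V -> V -> V;
  union : V -> V;
  power : V -> V;
  sep : (V -> Prop) -> V -> V;
  repl : (V -> V) -> V -> V;
  ext_ax : forall x y, (forall z, mem z x <-> mem z y) -> x = y;
  emp_ax : forall z, ~ mem z emp;
  upair_ax : forall x y z, mem z (upair x y) <-> z = x \/ z = y;
  union_ax : forall x z, mem z (union x) <-> exists y, mem y x /\ mem z y;
  power_ax : forall x z, mem z (power x) <-> (forall w, mem w z -> mem w x);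
  sep_ax : forall (P : V -> Prop) x z, mem z (sep P x) <-> mem z x /\ P z;
  repl_ax : forall (F : V -> V) x z, mem z (repl F x) <-> exists y, mem y x /\ z = F y;
  inf_ax : exists w, mem emp w /\
             forall x, mem x w -> mem (union (upair x (upair x x))) w;
  found_ax : forall P : V -> Prop,
      (forall x, (forall y, mem y x -> P y) -> P x) -> forall x, P x
}.

Arguments mem {z} _ _ : rename.
Arguments emp {z} : rename.
Arguments upair {z} _ _ : rename.
Arguments union {z} _ : rename.
Arguments power {z} _ : rename.
Arguments sep {z} _ _ : rename.
Arguments repl {z} _ _ : rename.

Section Defs.
Variable M : ZF.

Definition opair (x y : M) : M := upair (upair x x) (upair x y).

Definition graph (D : M) (f : M -> M) : M := repl (fun b => opair b (f b)) D.

Definition maps_into (D : M) (f : M -> M) (C : M -> Prop) : Prop :=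
  forall b, mem b D -> C (f b).

Definition sigma_power (A : M) (B : M -> M) : M :=
  union (repl (fun a => repl (fun P => opair a P) (power (B a))) A).

Definition small (A : M) (B : M -> M) (X : M) : Prop :=
  exists a, mem a A /\ exists f : M -> M,
    maps_into (B a) f (fun x => mem x X) /\
    (forall x, mem x X -> exists b, mem b (B a) /\ f b = x).

Inductive HS (A : M) (B : M -> M) : M -> Prop :=
| HS_intro : forall x, small A B x -> (forall y, mem y x -> HS A B y) -> HS A B x.

Definition s_H (B : M -> M) (a : M) (f : M -> M) : M := repl f (B a).

End Defs.

Arguments opair {M} _ _.
Arguments graph {M} _ _.
Arguments maps_into {M} _ _ _.
Arguments sigma_power {M} _ _.
Arguments small {M} _ _ _.
Arguments HS {M} _ _ _.
Arguments s_H {M} _ _ _.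

(* The homomorphism h : H((B_a)_{a in A}) -> X is obtained by well-founded
   recursion on membership: h({f b | b in B_a}) := t(a, h o f).  The only
   difficulty is that this is well defined, since one set x = s_H(a, f) has
   many presentations (a, f).  The image preserving equations settle this:
   [t_image_invariant] shows that t(a, phi o f) depends only on the image
   {f b | b in B_a}.  Its proof encodes each y in that image by the variable
   (a, f^{-1}(y)) of S = sum_a P(B_a) ([fiber], [opair_in_sigma_power]); this
   encoding is injective, so phi factors through it ([extend_along_injection])
   and both presentations become instances of one image preserving equation. *)

From Stdlib Require Import Classical ClassicalEpsilon.

Section SetFacts.
Variable M : ZF.

Lemma opair_inj_r (a u v : M) : opair a u = opair a v -> u = v.
Proof.
  unfold opair; intro E.
  assert (Hv : mem (upair a v) (upair (upair a a) (upair a u))).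
  { rewrite E. apply upair_ax. right; reflexivity. }
  apply upair_ax in Hv. destruct Hv as [Hv|Hv].
  - assert (va : v = a).
    { assert (H : mem v (upair a a))
        by (rewrite <- Hv; apply upair_ax; right; reflexivity).
      apply upair_ax in H; tauto. }
    subst v.
    assert (Hu : mem (upair a u) (upair (upair a a) (upair a a))).
    { rewrite <- E. apply upair_ax. right; reflexivity. }
    assert (Hu2 : upair a u = upair a a) by (apply upair_ax in Hu; tauto).
    assert (H : mem u (upair a a))
      by (rewrite <- Hu2; apply upair_ax; right; reflexivity).
    apply upair_ax in H; tauto.
  - assert (H : mem v (upair a u))
      by (rewrite <- Hv; apply upair_ax; right; reflexivity).
    apply upair_ax in H. destruct H as [H|H]; [|auto].
    subst v.
    assert (H : mem u (upair a a))
      by (rewrite Hv; apply upair_ax; right; reflexivity).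
    apply upair_ax in H; tauto.
Qed.

Lemma graph_ext (D : M) (f g : M -> M) :
  (forall b, mem b D -> f b = g b) -> graph D f = graph D g.
Proof.
  intro E; apply ext_ax; intro z; unfold graph; rewrite !repl_ax; split;
    intros [y [Hy ->]]; exists y; split; auto; rewrite (E y Hy); reflexivity.
Qed.

Lemma extend_along_injection (x X x0 : M) (code phi : M -> M) :
  mem x0 X ->
  (forall y y', mem y x -> mem y' x -> code y = code y' -> y = y') ->
  (forall y, mem y x -> mem (phi y) X) ->
  exists k : M -> M, (forall s, mem (k s) X) /\
                     (forall y, mem y x -> k (code y) = phi y).
Proof.
  intros Hx0 Hinj Hphi.
  set (Q := fun s v => (exists y, mem y x /\ s = code y /\ v = phi y) \/
                       (~ (exists y, mem y x /\ s = code y) /\ v = x0)).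
  set (k := fun s => epsilon (inhabits x0) (Q s)).
  assert (kQ : forall s, Q s (k s)).
  { intro s. apply epsilon_spec.
    destruct (classic (exists y, mem y x /\ s = code y)) as [[y [Hy Hs]]|Hn].
    - exists (phi y). left. eauto.
    - exists x0. right. auto. }
  exists k; split.
  - intro s. destruct (kQ s) as [[y [Hy [_ ->]]]|[_ ->]]; auto.
  - intros y Hy. destruct (kQ (code y)) as [[y' [Hy' [Hs ->]]]|[Hn _]].
    + f_equal. symmetry. apply Hinj; auto.
    + exfalso; eauto.
Qed.

Definition fiber (D : M) (f : M -> M) (y : M) : M := sep (fun b => f b = y) D.

Lemma fiber_injective (D : M) (f : M -> M) (y y' : M) :
  mem y (repl f D) -> fiber D f y = fiber D f y' -> y = y'.
Proof.
  intros Hy E. apply repl_ax in Hy. destruct Hy as [b [Hb ->]].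
  assert (H : mem b (fiber D f (f b))) by (unfold fiber; apply sep_ax; auto).
  rewrite E in H. unfold fiber in H. apply sep_ax in H. tauto.
Qed.

Lemma opair_in_sigma_power (A : M) (B : M -> M) (a P : M) :
  mem a A -> (forall w, mem w P -> mem w (B a)) ->
  mem (opair a P) (sigma_power A B).
Proof.
  intros Ha HP. unfold sigma_power. apply union_ax.
  exists (repl (fun P0 => opair a P0) (power (B a))). split.
  - apply repl_ax. exists a; split; auto.
  - apply repl_ax. exists P. split; auto. apply power_ax; exact HP.
Qed.

Lemma HS_presentation (A : M) (B : M -> M) (x : M) :
  HS A B x -> exists a f, mem a A /\ maps_into (B a) f (HS A B) /\ x = s_H B a f.
Proof.
  intros [x' [a [Ha [f [Hf Hsurj]]]] Hel].
  exists a, f. split; [exact Ha | split].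
  - intros b Hb. apply Hel, Hf, Hb.
  - apply ext_ax; intro z; unfold s_H; rewrite repl_ax; split.
    + intro Hz. destruct (Hsurj z Hz) as [b [Hb E]]. exists b; auto.
    + intros [b [Hb ->]]; apply Hf; auto.
Qed.

Lemma mem_s_H (B : M -> M) (a b : M) (f : M -> M) :
  mem b (B a) -> mem (f b) (s_H B a f).
Proof. intro Hb. apply repl_ax. eauto. Qed.

End SetFacts.

Arguments opair_inj_r {M} _ _ _ _.
Arguments graph_ext {M} _ _ _ _.
Arguments extend_along_injection {M} _ _ _ _ _ _ _ _.
Arguments fiber {M} _ _ _.
Arguments fiber_injective {M} _ _ _ _ _ _.
Arguments opair_in_sigma_power {M} _ _ _ _ _ _.
Arguments HS_presentation {M} _ _ _ _.
Arguments mem_s_H {M} _ _ _ _ _.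

Section Recursion.
Variables (M : ZF) (A : M) (B : M -> M) (X : M) (t : M -> M -> M).
Hypothesis ht : forall a f, mem a A -> maps_into (B a) f (fun x => mem x X) ->
  mem (t a (graph (B a) f)) X.
Hypothesis heq : forall a c (l r k : M -> M), mem a A -> mem c A ->
  maps_into (B a) l (fun x => mem x (sigma_power A B)) ->
  maps_into (B c) r (fun x => mem x (sigma_power A B)) ->
  (forall z, (exists b, mem b (B a) /\ l b = z) <->
             (exists b, mem b (B c) /\ r b = z)) ->
  maps_into (sigma_power A B) k (fun x => mem x X) ->
  t a (graph (B a) (fun b => k (l b))) = t c (graph (B c) (fun b => k (r b))).

Lemma t_image_invariant (a c : M) (f f' phi : M -> M) :
  mem a A -> mem c A -> repl f (B a) = repl f' (B c) ->
  (forall y, mem y (repl f (B a)) -> mem (phi y) X) ->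
  t a (graph (B a) (fun b => phi (f b))) = t c (graph (B c) (fun d => phi (f' d))).
Proof.
  intros Ha Hc Eimg Hphi.
  set (code := fun y => opair a (fiber (B a) f y)).
  assert (fimg : forall b, mem b (B a) -> mem (f b) (repl f (B a)))
    by (intros b Hb; apply repl_ax; eauto).
  assert (f'img : forall d, mem d (B c) -> mem (f' d) (repl f (B a)))
    by (intros d Hd; rewrite Eimg; apply repl_ax; eauto).
  assert (code_S : forall y, mem (code y) (sigma_power A B)).
  { intro y. apply opair_in_sigma_power; auto.
    intros w Hw. apply sep_ax in Hw. tauto. }
  (* X is inhabited, by the value we are computing. *)
  assert (Hx0 : mem (t a (graph (B a) (fun b => phi (f b)))) X)
    by (apply ht; auto; intros b Hb; apply Hphi, fimg, Hb).
  destruct (extend_along_injection (repl f (B a)) X _ code phi Hx0)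
    as [k [kX kcode]]; auto.
  { intros y y' Hy _ E. apply (fiber_injective (B a) f); auto.
    apply (opair_inj_r a), E. }
  rewrite (graph_ext (B a) _ (fun b => k (code (f b))))
    by (intros b Hb; rewrite kcode; auto).
  rewrite (graph_ext (B c) (fun d => phi (f' d)) (fun d => k (code (f' d))))
    by (intros d Hd; rewrite kcode; auto).
  apply heq; auto.
  - intros b _; apply code_S.
  - intros d _; apply code_S.
  - intro z; split; intros [b [Hb <-]].
    + assert (H : mem (f b) (repl f' (B c))) by (rewrite <- Eimg; auto).
      apply repl_ax in H. destruct H as [d [Hd E]].
      exists d. split; auto. rewrite E. reflexivity.
    + pose proof (f'img b Hb) as H.
      apply repl_ax in H. destruct H as [d [Hd E]].
      exists d. split; auto. rewrite E. reflexivity.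
  - intros s _. apply kX.
Qed.

Inductive hom_graph : M -> M -> Prop :=
| hom_graph_intro : forall a f g, mem a A ->
    (forall b, mem b (B a) -> hom_graph (f b) (g b)) ->
    hom_graph (s_H B a f) (t a (graph (B a) g)).

Lemma hom_graph_in_X (x v : M) : hom_graph x v -> mem v X.
Proof. induction 1; apply ht; auto. Qed.

Definition hom (x : M) : M := epsilon (inhabits (@emp M)) (hom_graph x).

Lemma hom_spec (x v : M) : hom_graph x v -> hom_graph x (hom x).
Proof. intro H. unfold hom. apply epsilon_spec. eauto. Qed.

(* The graph is functional: this is where image invariance is needed. *)
Lemma hom_graph_functional (x v : M) : hom_graph x v ->
  forall v', hom_graph x v' -> v = v'.
Proof.
  induction 1 as [a f g Ha HG IH]. intros v' HG'.
  remember (s_H B a f) as x eqn:Ex. destruct HG' as [c f' g' Hc HG'].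
  assert (g_hom : forall b, mem b (B a) -> g b = hom (f b))
    by (intros b Hb; apply IH; auto; eapply hom_spec; eauto).
  assert (g'_hom : forall d, mem d (B c) -> g' d = hom (f' d)).
  { intros d Hd.
    assert (H : mem (f' d) (s_H B a f)) by (rewrite <- Ex; apply mem_s_H, Hd).
    apply repl_ax in H. destruct H as [b [Hb E]].
    pose proof (HG' d Hd) as H. rewrite E in H |- *.
    rewrite <- g_hom by auto. symmetry. apply IH; auto. }
  rewrite (graph_ext (B a) g _ g_hom), (graph_ext (B c) g' _ g'_hom).
  apply t_image_invariant; auto.
  intros y Hy. apply repl_ax in Hy. destruct Hy as [b [Hb ->]].
  apply (hom_graph_in_X (f b)). eapply hom_spec; eauto.
Qed.

Lemma hom_graph_total (x : M) : HS A B x -> hom_graph x (hom x).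
Proof.
  revert x. apply (found_ax M (fun x => HS A B x -> hom_graph x (hom x))).
  intros x IH Hx.
  destruct (HS_presentation A B x Hx) as [a [f [Ha [Hf ->]]]].
  apply (hom_spec _ (t a (graph (B a) (fun b => hom (f b))))).
  constructor; auto. intros b Hb. apply IH; auto. apply mem_s_H, Hb.
Qed.

Lemma hom_in_X (x : M) : HS A B x -> mem (hom x) X.
Proof. intro Hx. apply (hom_graph_in_X x), hom_graph_total, Hx. Qed.

Lemma hom_is_hom (a : M) (f : M -> M) : mem a A -> maps_into (B a) f (HS A B) ->
  hom (s_H B a f) = t a (graph (B a) (fun b => hom (f b))).
Proof.
  intros Ha Hf.
  assert (HG : hom_graph (s_H B a f) (t a (graph (B a) (fun b => hom (f b)))))
    by (constructor; auto; intros b Hb; apply hom_graph_total, Hf, Hb).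
  symmetry. apply (hom_graph_functional _ _ HG). eapply hom_spec, HG.
Qed.

End Recursion.

Lemma hom_unique (M : ZF) (A : M) (B : M -> M) (t : M -> M -> M) (h h' : M -> M) :
  (forall a f, mem a A -> maps_into (B a) f (HS A B) ->
     h (s_H B a f) = t a (graph (B a) (fun b => h (f b)))) ->
  (forall a f, mem a A -> maps_into (B a) f (HS A B) ->
     h' (s_H B a f) = t a (graph (B a) (fun b => h' (f b)))) ->
  forall x, HS A B x -> h' x = h x.
Proof.
  intros Hh Hh'.
  apply (found_ax M (fun x => HS A B x -> h' x = h x)).
  intros x IH Hx.
  destruct (HS_presentation A B x Hx) as [a [f [Ha [Hf ->]]]].
  rewrite Hh', Hh by auto. f_equal. apply graph_ext. intros b Hb.
  apply IH; [apply mem_s_H, Hb | apply Hf, Hb].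
Qed.

Theorem mainTheorem3 (M : ZF) (A : M) (B : M -> M) (X : M) (t : M -> M -> M)
  (* (X, t) is an algebra: t : sum_{a in A} X^{B_a} -> X *)
  (ht : forall a f, mem a A -> maps_into (B a) f (fun x => mem x X) ->
          mem (t a (graph (B a) f)) X)
  (* all image preserving equations with variable set S = sum_{a} P(B_a) hold *)
  (heq : forall a c (l r k : M -> M), mem a A -> mem c A ->
          maps_into (B a) l (fun x => mem x (sigma_power A B)) ->
          maps_into (B c) r (fun x => mem x (sigma_power A B)) ->
          (forall z, (exists b, mem b (B a) /\ l b = z) <->
                     (exists b, mem b (B c) /\ r b = z)) ->
          maps_into (sigma_power A B) k (fun x => mem x X) ->
          t a (graph (B a) (fun b => k (l b))) = t c (graph (B c) (fun b => k (r b)))) :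
  exists h : M -> M,
    (forall x, HS A B x -> mem (h x) X) /\
    (forall a f, mem a A -> maps_into (B a) f (HS A B) ->
       h (s_H B a f) = t a (graph (B a) (fun b => h (f b)))) /\
    (forall h' : M -> M,
       (forall x, HS A B x -> mem (h' x) X) ->
       (forall a f, mem a A -> maps_into (B a) f (HS A B) ->
          h' (s_H B a f) = t a (graph (B a) (fun b => h' (f b)))) ->
       forall x, HS A B x -> h' x = h x).
Proof.
  exists (hom M A B t).
  assert (hom_hom := hom_is_hom M A B X t ht heq).
  split; [|split].
  - exact (hom_in_X M A B X t ht).
  - exact hom_hom.
  - intros h' _ Hh'. exact (hom_unique M A B t _ h' hom_hom Hh').
Qed.
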